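(* For every positive integer $n$, $$\iota(2^n-1)\leq 2n-1-\left\lfloor \frac{n-1}{2^{\lfloor \frac{\log n}{\log 2}\rfloor}}\right\rfloor-\left\lfloor \frac{\log n}{\log 2}\right\rfloor+\iota(n).$$
   Context: An addition chain producing $N$ is a sequence $1,2,s_3,\ldots,s_k=N$ in which every term after the first is the sum of two (not necessarily distinct) earlier terms; its length is the number of terms excluding the initial $1$. $\iota(N)$ denotes the length of the shortest addition chain producing $N$. $\lfloor\cdot\rfloor$ is the floor function and $\log$ the natural logarithm. *)

From mathcomp Require Import all_boot.
Set Implicit Arguments. Unset Strict Implicit. Unset Printing Implicit Defensive.

(* An addition chain is represented by the list c = [:: s_1; ...; s_k] of the
   terms AFTER the initial 1; the full chain is 1 :: c.
   Its length is size c (number of terms excluding the initial 1). *)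
Definition is_addition_chain (c : seq nat) : bool :=
  let s := 1 :: c in
  [forall i : 'I_(size s), (0 < i) ==>
     [exists j : 'I_i, exists k : 'I_i, nth 0 s i == nth 0 s j + nth 0 s k]].

Definition chain_for (N : nat) (c : seq nat) : Prop :=
  is_addition_chain c /\ last 1 c = N.

Definition is_iota (N m : nat) : Prop :=
  (exists c, chain_for N c /\ size c = m) /\
  (forall c, chain_for N c -> m <= size c).

From mathcomp Require Import all_boot.
From mathcomp Require Import zify.

Set Implicit Arguments.
Unset Strict Implicit.
Unset Printing Implicit Defensive.

(* The binary method (double, then add one, n - 1 times) gives
   iota(2^n - 1) <= 2n - 2, while every chain at most doubles at each step, so
   iota(n) >= ceil(log2 n).  Since floor((n - 1) / 2^m) with m = floor(log2 n)
   is 1 exactly when n is not a power of two, ceil(log2 n) is the sum of the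
   two floors in the statement, so the right-hand side is at least 2n - 1. *)

Lemma addition_chain_rcons c y z :
  is_addition_chain c -> y \in 1 :: c -> z \in 1 :: c ->
  is_addition_chain (rcons c (y + z)).
Proof.
move=> /forallP chain_c y_in z_in; apply/forallP => -[i lt_i] /=; apply/implyP => i_gt0.
move: lt_i; have -> : 1 :: rcons c (y + z) = rcons (1 :: c) (y + z) by [].
rewrite size_rcons ltnS leq_eqVlt => /orP[/eqP -> | lt_i].
  have y_idx : index y (1 :: c) < size (1 :: c) by rewrite index_mem.
  have z_idx : index z (1 :: c) < size (1 :: c) by rewrite index_mem.
  apply/existsP; exists (Ordinal y_idx); apply/existsP; exists (Ordinal z_idx).
  by rewrite !nth_rcons ltnn eqxx y_idx z_idx !nth_index.
have /existsP[j /existsP[k /eqP sum_jk]] := implyP (chain_c (Ordinal lt_i)) i_gt0.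
apply/existsP; exists j; apply/existsP; exists k.
by rewrite !nth_rcons lt_i !(ltn_trans _ lt_i) ?ltn_ord ?sum_jk.
Qed.

Lemma chain_for_rcons N c y z :
  chain_for N c -> y \in 1 :: c -> z \in 1 :: c ->
  chain_for (y + z) (rcons c (y + z)).
Proof.
by move=> [chain_c _] y_in z_in; split; [apply: addition_chain_rcons | rewrite last_rcons].
Qed.

Lemma chain_for_double_succ N c :
  chain_for N c -> chain_for N.*2.+1 (rcons (rcons c N.*2) N.*2.+1).
Proof.
move=> for_c; have N_in : N \in 1 :: c by case: for_c => _ <-; apply: mem_last.
have for_2N : chain_for N.*2 (rcons c N.*2).
  by rewrite -addnn; exact: (chain_for_rcons for_c N_in N_in).
rewrite -add1n; apply: (chain_for_rcons for_2N); first by [].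
by rewrite -rcons_cons mem_rcons mem_head.
Qed.

Lemma addition_chain_nth_leq c i :
  is_addition_chain c -> i < size (1 :: c) -> nth 0 (1 :: c) i <= 2 ^ i.
Proof.
move=> /forallP chain_c; elim/ltn_ind: i => -[|i] IH lt_i //.
have /existsP[j /existsP[k /eqP ->]] := implyP (chain_c (Ordinal lt_i)) isT.
have le_exp (l : 'I_i.+1) : nth 0 (1 :: c) l <= 2 ^ i.
  apply: leq_trans (IH _ (ltn_ord l) (ltn_trans (ltn_ord l) lt_i)) _.
  by rewrite leq_exp2l // -ltnS.
by rewrite expnS mul2n -addnn leq_add.
Qed.

Lemma chain_for_leq_exp N c : chain_for N c -> N <= 2 ^ size c.
Proof.
move=> [chain_c <-]; have := addition_chain_nth_leq chain_c (ltnSn (size c)).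
by rewrite nth_last.
Qed.

Lemma up_log_leq_iota N m : is_iota N m -> up_log 2 N <= m.
Proof.
by move=> [[c [/chain_for_leq_exp le_N <-]] _]; apply: up_log_min.
Qed.

Fixpoint mersenne_chain k : seq nat :=
  if k is k'.+1 then
    let N := 2 ^ k'.+1 - 1 in rcons (rcons (mersenne_chain k') N.*2) N.*2.+1
  else [::].

Lemma mersenne_chain_for k : chain_for (2 ^ k.+1 - 1) (mersenne_chain k).
Proof.
elim: k => [|k IH]; first by split; [apply/forallP => -[[|i] lt_i] | ].
have -> : 2 ^ k.+2 - 1 = (2 ^ k.+1 - 1).*2.+1.
  by rewrite expnS; have := expn_gt0 2 k.+1; lia.
exact: chain_for_double_succ.
Qed.

Lemma size_mersenne_chain k : size (mersenne_chain k) = k.*2.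
Proof. by elim: k => //= k IH; rewrite !size_rcons IH. Qed.

Lemma iota_mersenne_leq k m : is_iota (2 ^ k.+1 - 1) m -> m <= k.*2.
Proof.
by move=> [_ shortest]; rewrite -size_mersenne_chain; apply/shortest/mersenne_chain_for.
Qed.

Lemma trunc_log_add_div_up_log n :
  0 < n -> trunc_log 2 n + (n - 1) %/ 2 ^ trunc_log 2 n = up_log 2 n.
Proof.
move=> n_gt0; set m := trunc_log 2 n.
have le_n : 2 ^ m <= n by apply: trunc_logP.
have lt_n : n < 2 ^ m.+1 by apply: trunc_log_ltn.
have exp_gt0 : 0 < 2 ^ m by rewrite expn_gt0.
have [eq_n | ne_n] := eqVneq (2 ^ m) n.
  by rewrite -eq_n up_expnK // divn_small ?addn0 //; lia.
have -> : up_log 2 n = m.+1 by apply: up_log_eq; rewrite // ltn_neqAle ne_n le_n (ltnW lt_n).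
have le_q : 1 <= (n - 1) %/ 2 ^ m by rewrite leq_divRL //; lia.
have lt_q : (n - 1) %/ 2 ^ m < 2 by rewrite ltn_divLR // -expnS; lia.
lia.
Qed.

(* floor(log n / log 2) is trunc_log 2 n (largest e with 2^e <= n). *)
Theorem mainTheorem12 (n a b : nat) :
  0 < n -> is_iota (2 ^ n - 1) a -> is_iota n b ->
  a <= 2 * n - 1 - (n - 1) %/ 2 ^ (trunc_log 2 n) - trunc_log 2 n + b.
Proof.
move=> n_gt0 iota_a iota_b.
have le_a : a <= (n.-1).*2 by apply: iota_mersenne_leq; rewrite prednK.
have le_b := up_log_leq_iota iota_b.
rewrite -trunc_log_add_div_up_log // in le_b.
lia.
Qed.
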